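(* Let $P>2$ and $L$ be integers and let $\sigma,\tau\in\mathbb{Z}_P$ satisfy: (i) $\sigma,\tau\in\mathbb{Z}_P^{*}$; (ii) $L/2=\mathrm{ord}(\sigma)$; (iii) $2\le \mathrm{ord}(\sigma)$; (iv) $\mathrm{ord}(\sigma)\neq \#\mathbb{Z}_P^{*}$; (v) $1-\sigma^{j}\in\mathbb{Z}_P^{*}$ for all $1\le j<\mathrm{ord}(\sigma)$; (vi) $\tau\notin\{1,\sigma,\sigma^2,\dots,\sigma^{\mathrm{ord}(\sigma)-1}\}$. Define the $2P\times LP$ binary matrices $\hat H_C=(I(c_{j,\ell}))_{0\le j<2,\,0\le \ell<L}$ and $\hat H_D=(I(d_{j,\ell}))_{0\le j<2,\,0\le \ell<L}$ (block matrices with $P\times P$ blocks), where, with all arithmetic in $\mathbb{Z}_P$, $c_{j,\ell}=\sigma^{\ell-j}$ for $0\le\ell<L/2$ and $c_{j,\ell}=\tau\sigma^{\ell-j}$ for $L/2\le \ell<L$; $d_{j,\ell}=-\tau\sigma^{j-\ell}$ for $0\le\ell<L/2$ and $d_{j,\ell}=-\sigma^{j-\ell}$ for $L/2\le\ell<L$. Write $\hat H_C=(\hat c_{m,n})$, $\hat H_D=(\hat d_{m,n})$ with $0\le m<2P$, $0\le n<LP$. For a row index $0\le m'<2P$, let $N(m')=\{0\le n<LP \mid \hat d_{m',n}\neq 0\}$ (the support of the $m'$-th row of $\hat H_D$) and $E(m')=\{(m,n)\mid \hat c_{m,n}\neq 0,\ n\in N(m')\}$. Then for every $0\le m'<2P$,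 the $L$ variable nodes of the Tanner graph of $\hat H_C$ corresponding to the columns in $N(m')$, together with their adjacent check nodes, form a cycle of length $2L$. More precisely, there exist $L$ distinct row indices $m_0,\dots,m_{L-1}$ and $L$ distinct column indices $n_0,\dots,n_{L-1}$ such that $$\{(m_{2i-1},n_{2i}),\ (m_{2i},n_{2i}),\ (m_{2i},n_{2i+1}),\ (m_{2i+1},n_{2i+1}) \mid 0\le i<L/2\}=E(m'),$$ where $m_{-1}:=m_{L-1}$.
   Context: Rows and columns are indexed from $0$. $\mathbb{Z}_P^{*}=\{z\in\mathbb{Z}_P\mid \exists a\in\mathbb{Z}_P,\ za=1\}$ is the group of units of $\mathbb{Z}_P$, and $\mathrm{ord}(\sigma)=\min\{m>0\mid \sigma^m=1\}$; negative powers of $\sigma$ are taken in $\mathbb{Z}_P^{*}$. $I(1)$ is the $P\times P$ binary cyclic permutation matrix whose $r$-th row has its single $1$ in column $r+1 \bmod P$, and $I(c):=I(1)^{c}$ for $c\in\mathbb{Z}_P$ (so row $r$ of $I(c)$ has its single $1$ in column $r+c\bmod P$). The Tanner graph of a binary matrix $H$ is the bipartite graph with one check node per row, one variable node per column, and an edge between check node $m$ and variable node $n$ iff the $(m,n)$ entry of $H$ is nonzero. *)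

From HB Require Import structures.
From mathcomp Require Import all_boot all_order all_algebra.
Set Implicit Arguments. Unset Strict Implicit. Unset Printing Implicit Defensive.
Import Order.TTheory GRing.Theory Num.Theory.

Local Open Scope ring_scope.

Definition is_ord (P : nat) (s : 'Z_P) (k : nat) : Prop :=
  (0 < k)%N /\ s ^+ k = 1 /\ (forall m : nat, (0 < m)%N -> s ^+ m = 1 -> (k <= m)%N).

Definition unitsZ (P : nat) : {set 'Z_P} := [set z : 'Z_P | z \is a GRing.unit].

(* entry (r, s) of the P x P cyclic permutation matrix I(c):
   row r has its single 1 in column r + c mod P *)
Definition Ientry (P : nat) (c : 'Z_P) (r s : nat) : nat := (s == (r + c) %% P)%N.

Definition Imx (P : nat) (c : 'Z_P) : 'M[nat]_P :=
  \matrix_(r < P, s < P) Ientry c r s.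

Definition blockI (P J L : nat) (f : nat -> nat -> 'Z_P) : 'M[nat]_(J * P, L * P) :=
  \matrix_(m < J * P, n < L * P)
     Ientry (f (m %/ P)%N (n %/ P)%N) (m %% P)%N (n %% P)%N.

(* exponents are integers; negative powers are inverses in Z_P^* *)
Definition cexp (P L : nat) (s t : 'Z_P) (j l : nat) : 'Z_P :=
  if (l < L %/ 2)%N then s ^ (l%:Z - j%:Z) else t * s ^ (l%:Z - j%:Z).

Definition dexp (P L : nat) (s t : 'Z_P) (j l : nat) : 'Z_P :=
  if (l < L %/ 2)%N then - (t * s ^ (j%:Z - l%:Z)) else - (s ^ (j%:Z - l%:Z)).

Definition HC (P L : nat) (s t : 'Z_P) : 'M[nat]_(2 * P, L * P) :=
  blockI 2 L (cexp L s t).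
Definition HD (P L : nat) (s t : 'Z_P) : 'M[nat]_(2 * P, L * P) :=
  blockI 2 L (dexp L s t).

Definition Nset (P L : nat) (s t : 'Z_P) (m' : 'I_(2 * P)) : {set 'I_(L * P)} :=
  [set n | HD L s t m' n != 0%N].

Definition Eset (P L : nat) (s t : 'Z_P) (m' : 'I_(2 * P))
  : {set 'I_(2 * P) * 'I_(L * P)} :=
  [set mn | (HC L s t mn.1 mn.2 != 0%N) && (mn.2 \in Nset L s t m')].

(* Row m' of HD lies in row block j0 = m' %/ P and meets exactly one column in
   each of the L column blocks; each such column meets exactly one check node
   in each of the two row blocks of HC, so E(m') has 2L edges.  Computing the
   exponents modulo k = ord(sigma), the row-0 check node of column i < k is also
   that of column k + (j0 - i mod k), whose row-1 check node is that of column
   i + 1 mod k: this threads the L columns into one cycle.  Distinct first-half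
   columns have distinct check nodes in a row block, because
   t s^(a-u) + s^(u-b) = t s^(a-v) + s^(v-b) with u < v < k forces
   t = s^(u+v-a-b) once 1 - s^(v-u) is a unit, and tau is not a power of sigma. *)

From mathcomp Require Import all_boot all_order all_algebra.
From mathcomp Require Import ring zify.
Set Implicit Arguments. Unset Strict Implicit. Unset Printing Implicit Defensive.
Import Order.TTheory GRing.Theory Num.Theory.
Local Open Scope ring_scope.

Lemma inv_affine_collision (R : comUnitRingType) (c b x y : R) :
  x \is a GRing.unit -> y \is a GRing.unit -> y - x \is a GRing.unit ->
  c * x^-1 + b * x = c * y^-1 + b * y -> c = b * x * y.
Proof.
move=> xU yU yxU eq_xy.
have : c * x^-1 * y^-1 * (y - x) = b * (y - x).
  rewrite !mulrBr mulrVK // [_ * y^-1 * x]mulrAC mulrVK //.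
  have -> : c * x^-1 = c * y^-1 + b * y - b * x by rewrite -eq_xy addrK.
  ring.
move/(mulIr yxU) <-.
by rewrite [_ * y^-1 * x]mulrAC !mulrVK.
Qed.

Section PeriodicPowers.
Variables (R : comUnitRingType) (s : R) (k : nat).
Hypotheses (s_unit : s \is a GRing.unit) (s_period : s ^+ k = 1).

Lemma exprz_period (b n : int) : s ^ (b + n * k%:Z) = s ^ b.
Proof.
rewrite exprzDr // [n * _]mulrC -exprz_exp.
by have -> : s ^ k%:Z = 1 by []; rewrite exp1rz mulr1.
Qed.

Lemma exprz_period_eq (a b n : int) : a = b + n * k%:Z -> s ^ a = s ^ b.
Proof. by move->; apply: exprz_period. Qed.

Lemma exprz_period_exprn (c : int) : (0 < k)%N -> exists2 w : nat, (w < k)%N & s ^ c = s ^+ w.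
Proof.
move=> k_gt0; have k_neq0 : k%:Z != 0 by lia.
have := modz_ge0 c k_neq0; have := ltz_pmod c (d := k%:Z) (ltac:(lia)).
case c_mod: (c %% k%:Z)%Z => [w|//] w_lt _; exists w; first by lia.
by rewrite [in LHS](divz_eq c k%:Z) c_mod addrC exprz_period.
Qed.

Lemma twisted_sum_inj (t : R) (a b : int) (u v : nat) :
  (forall j : nat, (1 <= j < k)%N -> (1 - s ^+ j) \is a GRing.unit) ->
  (forall j : nat, (j < k)%N -> t != s ^+ j) -> (u < k)%N -> (v < k)%N ->
  t * s ^ (a - u%:Z) + s ^ (u%:Z - b) = t * s ^ (a - v%:Z) + s ^ (v%:Z - b) ->
  u = v.
Proof.
move=> one_sub_unit t_notin.
wlog uv : u v / (u < v)%N => [sym u_lt v_lt eq_uv|u_lt v_lt eq_uv].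
  by case: (ltngtP u v) => // uv; [|symmetry]; apply: sym.
exfalso.
have sU n : s ^+ n \is a GRing.unit by rewrite unitrX.
have diffU : s ^+ v - s ^+ u \is a GRing.unit.
  rewrite -(subnKC (ltnW uv)) exprD -{2}[s ^+ u]mulr1 -mulrBr unitrM sU.
  by rewrite -opprB unitrN one_sub_unit //; lia.
have expr_sub (x y : int) : s ^ (x - y) = s ^ x * (s ^ y)^-1.
  by rewrite exprzDr // invr_expz.
move: eq_uv; rewrite !expr_sub -!exprnP !mulrA ![_ * (s ^ b)^-1]mulrC.
move=> /(inv_affine_collision (sU u) (sU v) diffU) tE.
have [w w_lt sw] := exprz_period_exprn (u%:Z + v%:Z - a - b) (ltac:(lia)).
suff tE' : t = s ^ (u%:Z + v%:Z - a - b) by move: (t_notin w w_lt); rewrite tE' sw eqxx.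
apply: (mulIr (unitrXz a s_unit)).
rewrite !exprzDr // -!invr_expz -!exprnP tE.
rewrite [RHS]mulrAC divrK ?unitrXz //.
by rewrite [RHS]mulrC mulrA.
Qed.

End PeriodicPowers.

Section BlockIndex.
Variable p : nat.
Local Notation P := p.+2.

Lemma Ientry_neq0 (c : 'Z_P) (a b : nat) :
  (Ientry c (a %% P) (b %% P) != 0%N) = (inZp b == inZp a + c :> 'Z_P).
Proof. by rewrite /Ientry eqb0 negbK -val_eqE /= modnDml. Qed.

Variables (q : nat) (d : 'I_(q * P)).

(* Out-of-range blocks (l >= q) are sent to the default index d. *)
Definition block_index (l : nat) (y : 'Z_P) : 'I_(q * P) := insubd d (l * P + y)%N.

Lemma block_index_val l y : (l < q)%N -> val (block_index l y) = (l * P + y)%N.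
Proof.
move=> lq; rewrite val_insubd ifT //.
have : (l.+1 * P <= q * P)%N by rewrite leq_mul2r lq orbT.
have : (y < P)%N := ltn_ord y.
rewrite mulSn; lia.
Qed.

Lemma block_index_div l y : (l < q)%N -> (block_index l y %/ P)%N = l.
Proof. by move=> lq; rewrite block_index_val // divnMDl // divn_small ?addn0. Qed.

Lemma block_index_mod l y : (l < q)%N -> inZp (block_index l y) = y.
Proof. by move=> lq; apply: val_inj; rewrite /= block_index_val // modnMDl modn_small. Qed.

Lemma block_index_eta (m : 'I_(q * P)) : m = block_index (m %/ P) (inZp m).
Proof.
by apply: val_inj; rewrite block_index_val ?ltn_divLR //= -divn_eq.
Qed.

Lemma block_index_inj l y l' y' : (l < q)%N -> (l' < q)%N ->
  block_index l y = block_index l' y' -> l = l' /\ y = y'.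
Proof.
move=> lq l'q eq_blk; split; first by rewrite -(block_index_div y lq) eq_blk block_index_div.
by rewrite -(block_index_mod y lq) eq_blk block_index_mod.
Qed.

End BlockIndex.

Lemma blockI_block_index p J L (f : nat -> nat -> 'Z_p.+2)
    (dJ : 'I_(J * p.+2)) (dL : 'I_(L * p.+2)) j x l y : (j < J)%N -> (l < L)%N ->
  (blockI J L f (block_index dJ j x) (block_index dL l y) != 0%N) = (y == x + f j l).
Proof. by move=> jJ lL; rewrite mxE !block_index_div // Ientry_neq0 !block_index_mod. Qed.

Section Cycle.
Variables (p k : nat) (s t : 'Z_p.+2) (m' : 'I_(2 * p.+2)).
Local Notation P := p.+2.
Local Notation L := (2 * k)%N.
Hypotheses (s_unit : s \is a GRing.unit) (s_period : s ^+ k = 1) (k_ge2 : (2 <= k)%N).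
Hypothesis one_sub_unit : forall j : nat, (1 <= j < k)%N -> (1 - s ^+ j) \is a GRing.unit.
Hypothesis t_notin : forall j : nat, (j < k)%N -> t != s ^+ j.

Lemma cexp_lo j l : (l < k)%N -> cexp L s t j l = s ^ (l%:Z - j%:Z).
Proof. by move=> lk; rewrite /cexp mulKn // lk. Qed.

Lemma cexp_hi j l : (k <= l)%N -> cexp L s t j l = t * s ^ (l%:Z - j%:Z).
Proof. by move=> kl; rewrite /cexp mulKn // ltnNge kl. Qed.

Lemma dexp_lo j l : (l < k)%N -> dexp L s t j l = - (t * s ^ (j%:Z - l%:Z)).
Proof. by move=> lk; rewrite /dexp mulKn // lk. Qed.

Lemma dexp_hi j l : (k <= l)%N -> dexp L s t j l = - s ^ (j%:Z - l%:Z).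
Proof. by move=> kl; rewrite /dexp mulKn // ltnNge kl. Qed.

Let j0 := (m' %/ P)%N.
Let r0 : 'Z_P := inZp m'.

Fact j0_lt2 : (j0 < 2)%N. Proof. by rewrite ltn_divLR. Qed.

Fact columns_nonempty : (0 < L * P)%N. Proof. rewrite muln_gt0 /=; lia. Qed.

Let col0 : 'I_(L * P) := Ordinal columns_nonempty.

Definition column (l : nat) : 'I_(L * P) := block_index col0 l (r0 + dexp L s t j0 l).

Definition check (j l : nat) : 'I_(2 * P) :=
  block_index m' j (r0 + dexp L s t j0 l - cexp L s t j l).

Lemma Eset_check_column x :
  x \in Eset L s t m' <-> exists j l, [/\ (j < 2)%N, (l < L)%N & x = (check j l, column l)].
Proof.
case: x => m n; rewrite [m](block_index_eta m') [n](block_index_eta col0) inE /= /Nset inE.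
have mP : (m %/ P < 2)%N by rewrite ltn_divLR.
have nP : (n %/ P < L)%N by rewrite ltn_divLR.
have -> : HD L s t m' = HD L s t (block_index m' j0 r0) by rewrite -block_index_eta.
rewrite /HD !blockI_block_index // ?j0_lt2 //; split.
- case/andP => /eqP yE /eqP yE'; exists (m %/ P)%N, (n %/ P)%N; split => //.
  by rewrite /check /column -/j0 -/r0 -yE' yE addrK.
- case=> j [l [jP lP /pair_equal_spec [mE nE]]].
  have [-> ->] := block_index_inj mP jP mE; have [-> ->] := block_index_inj nP lP nE.
  by rewrite subrK !eqxx.
Qed.

Definition partner (i : nat) : nat :=
  if (i <= j0)%N then (k + j0 - i)%N else (2 * k + j0 - i)%N.

Definition succ_mod (i : nat) : nat := if i.+1 == k then 0%N else i.+1.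

Lemma partner_bounds i : (i < k)%N -> (k <= partner i < L)%N.
Proof. by have := j0_lt2; rewrite /partner; case: (leqP i j0); lia. Qed.

Lemma partner_inj i i' : (i < k)%N -> (i' < k)%N -> partner i = partner i' -> i = i'.
Proof. by have := j0_lt2; rewrite /partner; case: (leqP i j0); case: (leqP i' j0); lia. Qed.

Lemma partner_onto l : (k <= l < L)%N -> exists2 i, (i < k)%N & partner i = l.
Proof.
have := j0_lt2 => j0_lt lP.
case: (leqP (l - k) j0) => lj0; [exists (j0 + k - l)%N | exists (j0 + 2 * k - l)%N];
  rewrite /partner; try case: leqP; lia.
Qed.

Lemma succ_mod_lt i : (i < k)%N -> (succ_mod i < k)%N.
Proof. by rewrite /succ_mod; case: eqP; lia. Qed.

Lemma succ_mod_inj i i' : (i < k)%N -> (i' < k)%N -> succ_mod i = succ_mod i' -> i = i'.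
Proof. by rewrite /succ_mod; do 2!case: eqP; lia. Qed.

(* The exponent identities below hold up to n * k with -2 <= n <= 2. *)
Local Ltac period_shift :=
  first [ apply: (exprz_period_eq s_unit s_period (n := 0)); lia
        | apply: (exprz_period_eq s_unit s_period (n := 1)); lia
        | apply: (exprz_period_eq s_unit s_period (n := -1)); lia
        | apply: (exprz_period_eq s_unit s_period (n := 2)); lia
        | apply: (exprz_period_eq s_unit s_period (n := -2)); lia ].

Lemma check0_partner i : (i < k)%N -> check 0 (partner i) = check 0 i.
Proof.
move=> ik; have [kp _] := andP (partner_bounds ik); have := j0_lt2.
rewrite /check dexp_hi // cexp_hi // dexp_lo // cexp_lo // => j0_lt.
have -> : s ^ (j0%:Z - (partner i)%:Z) = s ^ (i%:Z - 0%:Z).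
  by rewrite /partner; case: leqP => ?; period_shift.
have -> : s ^ ((partner i)%:Z - 0%:Z) = s ^ (j0%:Z - i%:Z).
  by rewrite /partner; case: leqP => ?; period_shift.
by rewrite addrAC.
Qed.

Lemma check1_partner i : (i < k)%N -> check 1 (partner i) = check 1 (succ_mod i).
Proof.
move=> ik; have [kp _] := andP (partner_bounds ik); have := j0_lt2.
rewrite /check dexp_hi // cexp_hi // dexp_lo ?cexp_lo ?succ_mod_lt // => j0_lt.
have -> : s ^ (j0%:Z - (partner i)%:Z) = s ^ ((succ_mod i)%:Z - 1%:Z).
  by rewrite /partner /succ_mod; case: leqP => ?; case: eqP => ?; period_shift.
have -> : s ^ ((partner i)%:Z - 1%:Z) = s ^ (j0%:Z - (succ_mod i)%:Z).
  by rewrite /partner /succ_mod; case: leqP => ?; case: eqP => ?; period_shift.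
by rewrite addrAC.
Qed.

Lemma check_inj j u v : (j < 2)%N -> (u < k)%N -> (v < k)%N -> check j u = check j v -> u = v.
Proof.
move=> j2 uk vk /(block_index_inj j2 j2) [_]; rewrite !dexp_lo // !cexp_lo //.
rewrite -!addrA => /addrI /eqP; rewrite -!opprD eqr_opp => /eqP.
exact: (twisted_sum_inj s_unit s_period one_sub_unit t_notin uk vk).
Qed.

Definition cycle_check (a : nat) : 'I_(2 * P) :=
  if odd a then check 1 (succ_mod a./2) else check 0 a./2.

Definition cycle_column (a : nat) : 'I_(L * P) :=
  if odd a then column (partner a./2) else column a./2.

Lemma cycle_check_even i : cycle_check (2 * i) = check 0 i.
Proof. by rewrite /cycle_check [(2 * i)%N]mul2n odd_double half_double. Qed.

Lemma cycle_check_odd i : cycle_check (2 * i).+1 = check 1 (succ_mod i).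
Proof. by rewrite /cycle_check [(2 * i)%N]mul2n /= odd_double uphalf_double. Qed.

Lemma cycle_check_pred i : (i < k)%N ->
  cycle_check (if i == 0%N then L.-1 else (2 * i).-1) = check 1 i.
Proof.
move=> ik.
have [j -> <-] : exists2 j, (if i == 0%N then L.-1 else (2 * i).-1) = (2 * j).+1 & succ_mod j = i.
  by case: eqP => [->|i_neq0]; [exists k.-1 | exists i.-1]; try lia;
    rewrite /succ_mod; case: eqP; lia.
exact: cycle_check_odd.
Qed.

Lemma cycle_column_even i : cycle_column (2 * i) = column i.
Proof. by rewrite /cycle_column [(2 * i)%N]mul2n odd_double half_double. Qed.

Lemma cycle_column_odd i : cycle_column (2 * i).+1 = column (partner i).
Proof. by rewrite /cycle_column [(2 * i)%N]mul2n /= odd_double uphalf_double. Qed.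

Lemma cycle_check_inj a b : (a < L)%N -> (b < L)%N -> cycle_check a = cycle_check b -> a = b.
Proof.
move=> aL bL; have ak : (a./2 < k)%N by lia.
have bk : (b./2 < k)%N by lia.
rewrite /cycle_check; case: ifP => a_odd; case: ifP => b_odd eq_ab.
- have := check_inj (j := 1) isT (succ_mod_lt ak) (succ_mod_lt bk) eq_ab.
  by move/(succ_mod_inj ak bk); lia.
- by case: (block_index_inj (q := 2) (l := 1) (l' := 0) isT isT eq_ab).
- by case: (block_index_inj (q := 2) (l := 0) (l' := 1) isT isT eq_ab).
- by have := check_inj (j := 0) isT ak bk eq_ab; lia.
Qed.

Lemma column_inj l l' : (l < L)%N -> (l' < L)%N -> column l = column l' -> l = l'.
Proof. by move=> lL l'L /(block_index_inj lL l'L) []. Qed.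

Lemma cycle_column_inj a b : (a < L)%N -> (b < L)%N -> cycle_column a = cycle_column b -> a = b.
Proof.
move=> aL bL; have ak : (a./2 < k)%N by lia.
have bk : (b./2 < k)%N by lia.
have aL' : (a./2 < L)%N by lia.
have bL' : (b./2 < L)%N by lia.
have /andP [pa_ge pa_lt] := partner_bounds ak; have /andP [pb_ge pb_lt] := partner_bounds bk.
rewrite /cycle_column; case: ifP => a_odd; case: ifP => b_odd eq_ab.
- by have := column_inj pa_lt pb_lt eq_ab => /(partner_inj ak bk); lia.
- by have := column_inj pa_lt bL' eq_ab; lia.
- by have := column_inj aL' pb_lt eq_ab; lia.
- by have := column_inj aL' bL' eq_ab; lia.
Qed.

Lemma tanner_cycle :
  exists (ms : nat -> 'I_(2 * P)) (ns : nat -> 'I_(L * P)),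
    (forall a b : nat, (a < L)%N -> (b < L)%N -> ms a = ms b -> a = b) /\
    (forall a b : nat, (a < L)%N -> (b < L)%N -> ns a = ns b -> a = b) /\
    (forall x : 'I_(2 * P) * 'I_(L * P),
       x \in Eset L s t m' <->
       exists i : nat, (i < L %/ 2)%N /\
         (x = (ms (if i == 0%N then L.-1 else (2 * i).-1), ns (2 * i)%N) \/
          x = (ms (2 * i)%N, ns (2 * i)%N) \/
          x = (ms (2 * i)%N, ns (2 * i).+1) \/
          x = (ms (2 * i).+1, ns (2 * i).+1))).
Proof.
exists cycle_check, cycle_column; split; first exact: cycle_check_inj.
split; first exact: cycle_column_inj.
move=> x; rewrite Eset_check_column mulKn //; split.
- case=> j [l [j_lt l_lt ->]]; case: (ltnP l k) => [lk | kl].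
    exists l; split => //.
    rewrite cycle_check_pred // cycle_check_even cycle_column_even.
    by case: j j_lt => [|[|//]] _; [right; left | left].
  have [i ik <-] := partner_onto (introT andP (conj kl l_lt)).
  exists i; split => //; rewrite cycle_check_even cycle_check_odd cycle_column_odd.
  by case: j j_lt => [|[|//]] _; rewrite ?check0_partner ?check1_partner //;
    right; right; [left | right].
- case=> i [ik]; rewrite cycle_check_pred // cycle_check_even cycle_check_odd.
  rewrite cycle_column_even cycle_column_odd.
  have /andP [_ pL] := partner_bounds ik; have iL : (i < L)%N by lia.
  case=> [|[|[|]]] ->; [exists 1%N, i | exists 0%N, i | exists 0%N, (partner i)
    | exists 1%N, (partner i)]; by rewrite ?check0_partner ?check1_partner.
Qed.

End Cycle.

Theorem lemma1 (P L : nat) (sigma tau : 'Z_P) (k : nat) :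
  (2 < P)%N ->
  sigma \is a GRing.unit -> tau \is a GRing.unit ->
  is_ord sigma k ->
  L = (2 * k)%N ->
  (2 <= k)%N ->
  k != #|unitsZ P| ->
  (forall j : nat, (1 <= j < k)%N -> (1 - sigma ^+ j) \is a GRing.unit) ->
  (forall j : nat, (j < k)%N -> tau != sigma ^+ j) ->
  forall m' : 'I_(2 * P),
  exists (ms : nat -> 'I_(2 * P)) (ns : nat -> 'I_(L * P)),
    (forall a b : nat, (a < L)%N -> (b < L)%N -> ms a = ms b -> a = b) /\
    (forall a b : nat, (a < L)%N -> (b < L)%N -> ns a = ns b -> a = b) /\
    (forall x : 'I_(2 * P) * 'I_(L * P),
       x \in Eset L sigma tau m' <->
       exists i : nat, (i < L %/ 2)%N /\
         (x = (ms (if i == 0%N then L.-1 else (2 * i).-1), ns (2 * i)%N) \/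
          x = (ms (2 * i)%N, ns (2 * i)%N) \/
          x = (ms (2 * i)%N, ns (2 * i).+1) \/
          x = (ms (2 * i).+1, ns (2 * i).+1))).
Proof.
case: P sigma tau => [|[|p]] // sigma tau _ s_unit _ [_ [s_period _]] -> k_ge2 _
  one_sub_unit t_notin m'.
exact: (tanner_cycle m' s_unit s_period k_ge2 one_sub_unit t_notin).
Qed.
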